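(* Let $M$ be an ordinal monoid with merge and $A\subseteq M$. Then at least one of the following holds: (1) $a\cdot\mathrm{Cl}^{\mathrm{ord}+}_{\sharp}(A)\subsetneq\mathrm{Cl}^{\mathrm{ord}+}_{\sharp}(A)$ for some $a\in A$; (2) $\mathrm{Cl}^{\mathrm{ord}+}_{\sharp}(\mathrm{Cl}^{\omega}_{\sharp}(A))\subsetneq\mathrm{Cl}^{\mathrm{ord}+}_{\sharp}(A)$; (3) $x\cdot y=y$ and $x^\omega=y^\omega$ for all $x,y\in\mathrm{Cl}^{\mathrm{ord}+}_{\sharp}(A)$.
   Context: An ordinal monoid has generalised product $\pi$ on countable-ordinal-length words; $1=\pi(\varepsilon)$, $x\cdot y=\pi(xy)$, $x^\omega=\pi(xxx\cdots)$; ordered by $\le$ if $u\le v$ letterwise implies $\pi(u)\le\pi(v)$. $x^!$ idempotent power, $x^{!+k}$ eventual value of $x^{n!+k}$ in a finite semigroup. Ordinal monoid with merge: $(M,1,\le,\cdot,-^\omega,-^\sharp)$, $M$ finite, $(M,1,\le,\cdot,-^\omega)$ the presentation of an ordered finite ordinal monoid, $-^\sharp$ monotone with $a^{!+k}\le a^\sharp$, $(a^!)^\sharp=a^!$, $a^\sharp a^\sharp=(a^\sharp)^\sharp=a^\sharp$, $(ab)^\sharp=a(ba)^\sharp b$ for all $a,b\in M$, $k\in\mathbb Z$. Closures of $A\subseteq M$: $\mathrm{Cl}^{+}_{\sharp}(A)$ closure under $\cdot$ and $-^\sharp$; $\mathrm{Cl}^{\mathrm{ord}+}_{\sharp}(A)$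 closure under $\cdot$, $-^\sharp$ and $-^\omega$; $\mathrm{Cl}^{\omega}_{\sharp}(A)=\{a\cdot b^\omega:a,b\in\mathrm{Cl}^{+}_{\sharp}(A)\}$. $a\cdot X=\{a\cdot x: x\in X\}$. *)

From mathcomp Require Import all_boot all_order all_algebra.
Set Implicit Arguments. Unset Strict Implicit. Unset Printing Implicit Defensive.

Section OMM.
Variables (M : finType) (one : M) (le : rel M) (mul : M -> M -> M)
          (om sh : M -> M).

Fixpoint pw (x : M) (n : nat) : M :=
  if n is n'.+1 then mul x (pw x n') else one.

Definition ev_pow (x : M) (k : int) (y : M) : Prop :=
  exists N : nat, forall n : nat, (N <= n)%N ->
    pw x `|((n`!)%:Z + k)%R|%N = y.

(* (M,1,<=,.,-^omega) is the presentation of an ordered finite ordinal monoid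
   (algebraic axiomatisation, cf. Bedon--Carton, in the ordered setting). *)
Record ordered_ordinal_monoid : Prop := {
  le_refl  : forall x, le x x;
  le_anti  : forall x y, le x y -> le y x -> x = y;
  le_trans : forall x y z, le x y -> le y z -> le x z;
  mulA     : forall x y z, mul x (mul y z) = mul (mul x y) z;
  mul1x    : forall x, mul one x = x;
  mulx1    : forall x, mul x one = x;
  om_shift : forall x y, om (mul x y) = mul x (om (mul y x));
  om_pow   : forall x n, (0 < n)%N -> om (pw x n) = om x;
  om_one   : om one = one;
  mul_mono : forall x x' y y', le x x' -> le y y' -> le (mul x y) (mul x' y');
  om_mono  : forall x y, le x y -> le (om x) (om y)
}.

Record ordinal_monoid_merge : Prop := {
  omm_base    : ordered_ordinal_monoid;
  sh_mono     : forall a b, le a b -> le (sh a) (sh b);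
  sh_ge_pow   : forall a (k : int) y, ev_pow a k y -> le y (sh a);
  sh_idem_pow : forall a y, ev_pow a 0 y -> sh y = y;
  sh_sq       : forall a, mul (sh a) (sh a) = sh a;
  sh_sh       : forall a, sh (sh a) = sh a;
  sh_mulC     : forall a b, sh (mul a b) = mul a (mul (sh (mul b a)) b)
}.

Definition closed_mul (B : {set M}) : bool :=
  [forall x, forall y, (x \in B) && (y \in B) ==> (mul x y \in B)].
Definition closed_fun (f : M -> M) (B : {set M}) : bool :=
  [forall x, (x \in B) ==> (f x \in B)].

Definition Cl_plus (A : {set M}) : {set M} :=
  \bigcap_(B : {set M} | (A \subset B) && closed_mul B && closed_fun sh B) B.

Definition Cl_ord (A : {set M}) : {set M} :=
  \bigcap_(B : {set M} | [&& A \subset B, closed_mul B, closed_fun sh B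
                           & closed_fun om B]) B.

Definition Cl_omega (A : {set M}) : {set M} :=
  [set mul a (om b) | a in Cl_plus A, b in Cl_plus A].

Definition lmul (a : M) (X : {set M}) : {set M} := [set mul a x | x in X].

End OMM.

From Pilot Require Import Defs.
From mathcomp Require Import all_boot all_order all_algebra.
From mathcomp Require Import zify.
Set Implicit Arguments. Unset Strict Implicit. Unset Printing Implicit Defensive.

(* Let C := Cl^{ord+}_#(A) and call x onto when x . C = C.  If (1) fails, every
   a in A is onto; if (2) fails, C is generated by Cl^omega_#(A).  Non-onto
   elements are stable under products, # and omega, since x . y, x^# = x . x^#
   and x^omega = x . x^omega are left multiples of x.  So if no a . b^omega is
   onto, C contains no onto element although A does: A, hence C, is empty.
   Otherwise b^omega is onto and b . b^omega = b^omega, so b acts trivially on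
   C.  An onto t has an onto idempotent power e, which acts trivially on C;
   then t^omega = e^omega = (e b)^omega = e (b e)^omega = b^omega, and as t
   fixes the onto element t^omega, t acts trivially on C and t^# = t.  Thus
   onto elements are closed under the generating operations, and C is onto. *)

Section OrdinalClosure.
Variables (M : finType) (mul : M -> M -> M) (om sh : M -> M).
Local Notation cl := (Cl_ord mul om sh).

Lemma Cl_ord_sub (A : {set M}) : A \subset cl A.
Proof.
by apply/subsetP => x xA; apply/bigcapP => B /and4P[/subsetP AB _ _ _]; apply: AB.
Qed.

Lemma Cl_ord_min (A B : {set M}) :
  A \subset B -> closed_mul mul B -> closed_fun sh B -> closed_fun om B ->
  cl A \subset B.
Proof. by move=> AB mulB shB omB; apply: bigcap_inf; rewrite AB mulB shB omB. Qed.

Lemma Cl_ord_mul (A : {set M}) : {in cl A &, forall x y, mul x y \in cl A}.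
Proof.
move=> x y /bigcapP xA /bigcapP yA; apply/bigcapP => B B_cl.
have /and4P[_ /forallP/(_ x)/forallP/(_ y)/implyP mulB _ _] := B_cl.
by apply: mulB; rewrite xA ?yA.
Qed.

Lemma Cl_ord_sh (A : {set M}) : {in cl A, forall x, sh x \in cl A}.
Proof.
move=> x /bigcapP xA; apply/bigcapP => B B_cl.
have /and4P[_ _ /forallP/(_ x)/implyP shB _] := B_cl.
by apply: shB; rewrite xA.
Qed.

Lemma Cl_ord_om (A : {set M}) : {in cl A, forall x, om x \in cl A}.
Proof.
move=> x /bigcapP xA; apply/bigcapP => B B_cl.
have /and4P[_ _ _ /forallP/(_ x)/implyP omB] := B_cl.
by apply: omB; rewrite xA.
Qed.

Lemma Cl_ord_closed (A : {set M}) :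
  [/\ closed_mul mul (cl A), closed_fun sh (cl A) & closed_fun om (cl A)].
Proof.
split; apply/forallP => x; last 2 first.
- by apply/implyP; apply: Cl_ord_sh.
- by apply/implyP; apply: Cl_ord_om.
by apply/forallP => y; apply/implyP => /andP[]; apply: Cl_ord_mul.
Qed.

Lemma Cl_ord_ind (A : {set M}) (P : pred M) :
  {in A, forall a, P a} ->
  {in cl A &, forall x y, P x -> P y -> P (mul x y)} ->
  {in cl A, forall x, P x -> P (sh x)} ->
  {in cl A, forall x, P x -> P (om x)} ->
  {in cl A, forall x, P x}.
Proof.
move=> PA Pmul Psh Pom x xA.
suff /subsetP/(_ x xA) : cl A \subset [set y in cl A | P y] by rewrite inE => /andP[].
apply: Cl_ord_min.
- by apply/subsetP => a aA; rewrite inE (subsetP (Cl_ord_sub A)) ?PA.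
- apply/forallP => y; apply/forallP => z; apply/implyP; rewrite !inE.
  by case/andP=> /andP[yA Py] /andP[zA Pz]; rewrite Cl_ord_mul ?Pmul.
- by apply/forallP => y; apply/implyP; rewrite !inE => /andP[yA Py]; rewrite Cl_ord_sh ?Psh.
- by apply/forallP => y; apply/implyP; rewrite !inE => /andP[yA Py]; rewrite Cl_ord_om ?Pom.
Qed.

Lemma Cl_plus_sub_Cl_ord (A : {set M}) : Cl_plus mul sh A \subset cl A.
Proof.
have [mulC shC _] := Cl_ord_closed A.
by apply: bigcap_inf; rewrite Cl_ord_sub mulC shC.
Qed.

Lemma Cl_omega_sub_Cl_ord (A : {set M}) : Cl_omega mul om sh A \subset cl A.
Proof.
apply/subsetP => _ /imset2P[p q pA qA ->].
have /subsetP plusA := Cl_plus_sub_Cl_ord A.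
by rewrite Cl_ord_mul ?Cl_ord_om ?plusA.
Qed.

Lemma Cl_ord_Cl_omega_sub (A : {set M}) : cl (Cl_omega mul om sh A) \subset cl A.
Proof.
have [mulC shC omC] := Cl_ord_closed A.
exact: Cl_ord_min (Cl_omega_sub_Cl_ord A) mulC shC omC.
Qed.

End OrdinalClosure.

Section LeftMultiplicationOnto.
Variables (M : finType) (mul : M -> M -> M) (C : {set M}).
Hypothesis mulA : associative mul.
Hypothesis mulC : {in C &, forall x y, mul x y \in C}.

Definition lmul_onto x := C \subset lmul mul x C.

Lemma lmul_sub x : x \in C -> lmul mul x C \subset C.
Proof. by move=> xC; apply/subsetP => _ /imsetP[c cC ->]; apply: mulC. Qed.

Lemma lmul_ontoP x c : lmul_onto x -> c \in C -> exists2 c', c' \in C & c = mul x c'.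
Proof. by move=> /subsetP onto_x /onto_x/imsetP. Qed.

Lemma lmul_ontoM x y : lmul_onto x -> lmul_onto y -> lmul_onto (mul x y).
Proof.
move=> onto_x onto_y; apply/subsetP => c cC.
have [c1 c1C ->] := lmul_ontoP onto_x cC.
have [c2 c2C ->] := lmul_ontoP onto_y c1C.
by rewrite mulA; apply: imset_f.
Qed.

Lemma lmul_onto_factorl x y : y \in C -> lmul_onto (mul x y) -> lmul_onto x.
Proof.
move=> yC onto_xy; apply/subsetP => c cC.
have [c' c'C ->] := lmul_ontoP onto_xy cC.
by rewrite -mulA imset_f ?mulC.
Qed.

(* By counting: [x . (y . C)] fills the finite set [C], so [y . C] must too. *)
Lemma lmul_onto_factorr x y : x \in C -> y \in C -> lmul_onto (mul x y) -> lmul_onto y.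
Proof.
move=> xC yC; rewrite /lmul_onto.
have -> : lmul mul (mul x y) C = lmul mul x (lmul mul y C).
  by rewrite /lmul -imset_comp; apply: eq_imset => c /=; rewrite mulA.
move/subset_leq_card/leq_trans/(_ (leq_imset_card _ _)) => card_yC.
by have /eqP -> : lmul mul y C == C by rewrite eqEcard lmul_sub.
Qed.

Lemma lmul_onto_fix x u :
  lmul_onto u -> mul x u = u -> {in C, forall c, mul x c = c}.
Proof. by move=> onto_u xu c /(lmul_ontoP onto_u)[c' _ ->]; rewrite mulA xu. Qed.

End LeftMultiplicationOnto.

Section Powers.
Variables (M : finType) (one : M) (mul : M -> M -> M).
Hypotheses (mulA : associative mul) (mul1x : left_id one mul) (mulx1 : right_id one mul).
Local Notation pw := (pw one mul).

Lemma pwD x m n : pw x (m + n) = mul (pw x m) (pw x n).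
Proof. by elim: m => [|m IH] /=; rewrite ?mul1x // IH mulA. Qed.

Lemma pw_collision x : exists i j, i < j /\ pw x i = pw x j.
Proof.
pose f (i : 'I_#|M|.+1) := pw x i.
have /injectivePn[i [j neq_ij eq_ij]] : ~~ injectiveb f.
  by apply/injectiveP => /leq_card; rewrite card_ord ltnn.
by case: (ltngtP i j) neq_ij => [lt_ij|lt_ji|/val_inj->]; rewrite ?eqxx //;
  [exists i, j | exists j, i].
Qed.

Lemma pw_idempotent x : exists2 k, 0 < k & mul (pw x k) (pw x k) = pw x k.
Proof.
have [i [j [lt_ij eq_ij]]] := pw_collision x.
have period l : i <= l -> pw x (l + (j - i)) = pw x l.
  move=> le_il; have -> : l + (j - i) = l - i + j by lia.
  by rewrite pwD -eq_ij -pwD subnK.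
have periodM l m : i <= l -> pw x (l + m * (j - i)) = pw x l.
  move=> le_il; elim: m => [|m IH]; first by rewrite addn0.
  by rewrite mulSnr addnA period ?(leq_trans le_il (leq_addr _ _)).
exists (j * (j - i)); first by rewrite muln_gt0; lia.
by rewrite -pwD periodM //; nia.
Qed.

Lemma pw_idem x n : mul x x = x -> pw x n.+1 = x.
Proof.
move=> xx; elim: n => [|n IH]; first exact: mulx1.
by rewrite -[pw x n.+2]/(mul x (pw x n.+1)) IH.
Qed.

Lemma ev_pow_idem x : mul x x = x -> ev_pow one mul x 0 x.
Proof.
move=> xx; exists 0 => n _; rewrite GRing.addr0 absz_nat.
by rewrite -(prednK (fact_gt0 n)) pw_idem.
Qed.

Lemma pw_in (C : {set M}) x n :
  {in C &, forall y z, mul y z \in C} -> x \in C -> pw x n.+1 \in C.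
Proof.
move=> mulC xC; elim: n => [|n IH]; first by rewrite /= mulx1.
by rewrite -[pw x n.+2]/(mul x (pw x n.+1)) mulC.
Qed.

End Powers.

Section OntoElements.
Variables (M : finType) (one : M) (le : rel M) (mul : M -> M -> M) (om sh : M -> M).
Hypothesis HM : ordinal_monoid_merge one le mul om sh.
Variable A : {set M}.
Local Notation C := (Cl_ord mul om sh A).
Local Notation onto := (lmul_onto mul C).

Let mulA : associative mul := Defs.mulA (omm_base HM).
Let mul1x : left_id one mul := mul1x (omm_base HM).
Let mulx1 : right_id one mul := mulx1 (omm_base HM).
Let mulC : {in C &, forall x y, mul x y \in C} := @Cl_ord_mul _ mul om sh A.

Lemma mul_om x : mul x (om x) = om x.
Proof. by have := om_shift (omm_base HM) x one; rewrite mulx1 mul1x. Qed.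

Lemma mul_sh x : mul x (sh x) = sh x.
Proof. by have := sh_mulC HM x one; rewrite mulx1 mul1x mulx1. Qed.

Lemma onto_pw t n : onto t -> onto (pw one mul t n.+1).
Proof.
move=> onto_t; elim: n => [|n IH]; first by rewrite /= mulx1.
by rewrite -[pw _ _ t n.+2]/(mul t (pw one mul t n.+1)) lmul_ontoM.
Qed.

Lemma onto_acts_trivially q t :
  q \in C -> onto (om q) -> t \in C -> onto t ->
  {in C, forall c, mul t c = c} /\ om t = om q.
Proof.
move=> qC onto_omq tC onto_t.
have q_id := lmul_onto_fix mulA onto_omq (mul_om q).
have [[//|k] _ ee] := pw_idempotent mulA mul1x t.
set e := pw one mul t k.+1 in ee.
have eC : e \in C by apply: pw_in.
have e_id := lmul_onto_fix mulA (onto_pw k onto_t) ee.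
have om_t : om t = om q.
  rewrite -(om_pow (omm_base HM) t (ltn0Sn k)) -/e -(e_id q qC).
  by rewrite (om_shift (omm_base HM)) e_id q_id // Cl_ord_om // mulC.
have t_omq : mul t (om q) = om q by rewrite -om_t mul_om.
by split=> //; move: (lmul_onto_fix mulA onto_omq t_omq).
Qed.

Lemma Cl_ord_onto q :
  q \in C -> onto (om q) -> {in A, forall a, onto a} -> {in C, forall x, onto x}.
Proof.
move=> qC onto_omq onto_A; apply: Cl_ord_ind => // [x y _ yC|x xC onto_x|x xC onto_x].
- exact: lmul_ontoM.
- have [x_id _] := onto_acts_trivially qC onto_omq xC onto_x.
  by rewrite (sh_idem_pow HM (ev_pow_idem mulx1 (x_id x xC))).
- by have [_ ->] := onto_acts_trivially qC onto_omq xC onto_x.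
Qed.

Lemma Cl_ord_acts_trivially q :
  q \in C -> onto (om q) -> {in A, forall a, onto a} ->
  forall x y, x \in C -> y \in C -> mul x y = y /\ om x = om y.
Proof.
move=> qC onto_omq onto_A x y xC yC.
have onto_C := Cl_ord_onto qC onto_omq onto_A.
have [x_id om_x] := onto_acts_trivially qC onto_omq xC (onto_C x xC).
have [_ om_y] := onto_acts_trivially qC onto_omq yC (onto_C y yC).
by rewrite x_id // om_x om_y.
Qed.

Lemma Cl_ord_not_onto :
  Cl_ord mul om sh (Cl_omega mul om sh A) = C ->
  {in Cl_omega mul om sh A, forall w, ~~ onto w} -> {in C, forall x, ~~ onto x}.
Proof.
move=> genC not_onto.
have := @Cl_ord_ind _ mul om sh _ (fun x => ~~ onto x) not_onto; rewrite genC.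
apply=> [x y xC yC _|x xC|x xC]; apply: contra.
- exact: (lmul_onto_factorr mulA mulC xC yC).
- by rewrite -mul_sh; exact: (lmul_onto_factorl mulA mulC (Cl_ord_sh xC)).
- by rewrite -mul_om; exact: (lmul_onto_factorl mulA mulC (Cl_ord_om xC)).
Qed.

End OntoElements.

Theorem lemma5p10 (M : finType) (one : M) (le : rel M) (mul : M -> M -> M)
    (om sh : M -> M)
    (HM : ordinal_monoid_merge one le mul om sh) (A : {set M}) :
  (exists2 a, a \in A &
     lmul mul a (Cl_ord mul om sh A) \proper Cl_ord mul om sh A)
  \/ (Cl_ord mul om sh (Cl_omega mul om sh A) \proper Cl_ord mul om sh A)
  \/ (forall x y, x \in Cl_ord mul om sh A -> y \in Cl_ord mul om sh A ->
        mul x y = y /\ om x = om y).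
Proof.
set C := Cl_ord mul om sh A; set W := Cl_omega mul om sh A.
have mulA := Defs.mulA (omm_base HM).
have mulC : {in C &, forall x y, mul x y \in C} := @Cl_ord_mul _ mul om sh A.
have /subsetP AC := Cl_ord_sub mul om sh A.
have [/exists_inP[a aA proper_aC]|/exists_inPn not_proper] :=
  boolP [exists a in A, lmul mul a C \proper C]; first by left; exists a.
have onto_A : {in A, forall a, lmul_onto mul C a}.
  by move=> a aA; move: (not_proper a aA); rewrite properE lmul_sub ?AC //= negbK.
right; have [|] := boolP (Cl_ord mul om sh W \proper C); first by left.
rewrite properE Cl_ord_Cl_omega_sub negbK => sub_C; right.
have genC : Cl_ord mul om sh W = C by apply/eqP; rewrite eqEsubset sub_C Cl_ord_Cl_omega_sub.
have [/exists_inP[_ /imset2P[p q pA qA ->] onto_w]|/exists_inPn not_onto_W] :=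
  boolP [exists w in W, lmul_onto mul C w].
  have /subsetP plusC := Cl_plus_sub_Cl_ord mul om sh A.
  apply: (Cl_ord_acts_trivially HM (q := q)); rewrite ?plusC //.
  by apply: (lmul_onto_factorr mulA mulC _ _ onto_w); rewrite ?Cl_ord_om ?plusC.
have not_onto_C := Cl_ord_not_onto HM genC not_onto_W.
have emptyC : {in C, forall x, false}.
  apply: (@Cl_ord_ind _ mul om sh A (fun _ => false)) => // a aA.
  by move: (not_onto_C a (AC a aA)); rewrite onto_A.
by move=> x y /emptyC.
Qed.
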